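(* Let $\mathcal{W}=\{W_1,\dots,W_N\}$ be a finite set of $d\times k$ real matrices and let $\mathcal{V}$ be a linear subspace of $\mathbb{S}^d$. Consider the semidefinite program in the variables $X\in\mathbb{S}^d$, $X_i,T_i\in\mathbb{S}^k$ ($i=1,\dots,N$): $$\text{maximize }\sum_{i=1}^N\operatorname{trace}T_i\ \text{ subject to } X\in\mathcal{V},\ X=\sum_{i=1}^NW_iX_iW_i^T,\ X_i\succeq T_i,\ I\succeq T_i\succeq 0\ (i=1,\dots,N).$$ If $(X,X_1,\dots,X_N,T_1,\dots,T_N)$ is any optimal solution of this program, then $\sum_{i=1}^N\operatorname{rank}X_i\ge\sum_{i=1}^N\operatorname{rank}X_i'$ for all $X_1',\dots,X_N'\in\mathbb{S}^k_+$ with $\sum_{i=1}^NW_iX_i'W_i^T\in\mathcal{V}$; that is, $X$ is obtained from a representation maximizing $\sum_i\operatorname{rank}X_i$ over $\mathcal{V}\cap\mathcal{C}(\mathcal{W})^*$.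
   Context: $\mathbb{S}^d$ denotes real symmetric $d\times d$ matrices; $A\succeq B$ means $A-B$ is positive semidefinite; $\mathbb{S}^k_+$ is the positive semidefinite cone. $\mathcal{C}(\mathcal{W})^*=\{\sum_{i=1}^NW_iX_iW_i^T: X_i\in\mathbb{S}^k_+\}$. Note that the constraints force $X_i\succeq 0$. *)

From HB Require Import structures.
From mathcomp Require Import all_boot all_order all_algebra.
From mathcomp Require Import reals.
Set Implicit Arguments. Unset Strict Implicit. Unset Printing Implicit Defensive.
Import Order.TTheory GRing.Theory Num.Theory.
Local Open Scope ring_scope.

Definition symmx (R : realType) (n : nat) (A : 'M[R]_n) : Prop := A^T = A.

Definition psdmx (R : realType) (n : nat) (A : 'M[R]_n) : Prop :=
  symmx A /\ forall v : 'cV[R]_n, 0 <= (v^T *m A *m v) 0 0.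

Definition loewner_ge (R : realType) (n : nat) (A B : 'M[R]_n) : Prop :=
  psdmx (A - B).

Definition Wsum (R : realType) (d k N : nat) (W : 'I_N -> 'M[R]_(d, k))
  (Xs : 'I_N -> 'M[R]_k) : 'M[R]_d :=
  \sum_(i < N) (W i *m Xs i *m (W i)^T).

Definition sdp_feasible (R : realType) (d k N : nat) (W : 'I_N -> 'M[R]_(d, k))
  (V : {vspace 'M[R]_d}) (X : 'M[R]_d) (Xs Ts : 'I_N -> 'M[R]_k) : Prop :=
  [/\ symmx X, (forall i, symmx (Xs i)) & (forall i, symmx (Ts i))] /\
  [/\ (X \in V)%VS, X = Wsum W Xs,
      (forall i, loewner_ge (Xs i) (Ts i)),
      (forall i, loewner_ge 1%:M (Ts i)) &
      (forall i, loewner_ge (Ts i) 0)].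

Definition sdp_objective (R : realType) (k N : nat) (Ts : 'I_N -> 'M[R]_k) : R :=
  \sum_(i < N) \tr (Ts i).

Definition sdp_optimal (R : realType) (d k N : nat) (W : 'I_N -> 'M[R]_(d, k))
  (V : {vspace 'M[R]_d}) (X : 'M[R]_d) (Xs Ts : 'I_N -> 'M[R]_k) : Prop :=
  sdp_feasible W V X Xs Ts /\
  forall (X' : 'M[R]_d) (Xs' Ts' : 'I_N -> 'M[R]_k),
    sdp_feasible W V X' Xs' Ts' -> sdp_objective Ts' <= sdp_objective Ts.

(* For psd [S], the orthogonal projection [P] onto the range of [S] satisfies
   [0 <= P <= I], [P <= t S] for [t] large enough, and [tr P = rank S]; scaling a
   representation [X_i'] by one common [t] therefore gives a feasible point of
   objective [sum_i rank X_i'].  Conversely, in any feasible point [0 <= T_i <= X_i]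
   forces [ker X_i] into [ker T_i], hence [T_i <= P_i] for the projection [P_i]
   onto the range of [X_i], and [tr T_i <= rank X_i].  Optimality compares the
   two bounds. *)

From HB Require Import structures.
From mathcomp Require Import all_boot all_order all_algebra.
From mathcomp Require Import reals.
From mathcomp Require Import ring lra.
Set Implicit Arguments. Unset Strict Implicit. Unset Printing Implicit Defensive.
Import Order.TTheory GRing.Theory Num.Theory.
Local Open Scope ring_scope.

Lemma quadratic_ge0_discr (R : realFieldType) (a b c : R) : 0 <= c ->
  (forall t, 0 <= a + 2 * t * b + t ^+ 2 * c) -> b ^+ 2 <= a * c.
Proof.
move=> c_ge0 hq.
have a_ge0 : 0 <= a by have := hq 0; rewrite mulr0 mul0r expr0n mul0r !addr0.
have [c0|c_gt0] := eqVneq c 0.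
  have [b0|b_neq0] := eqVneq b 0; first by rewrite b0 c0 expr0n mulr0.
  have := hq (- (a + 1) / (2 * b)).
  have -> : 2 * (- (a + 1) / (2 * b)) * b = - (a + 1) by field.
  rewrite c0 mulr0 addr0; lra.
have c_pos : 0 < c by rewrite lt0r c_gt0.
have := hq (- b / c).
have -> : a + 2 * (- b / c) * b + (- b / c) ^+ 2 * c = a - b ^+ 2 / c by field.
rewrite subr_ge0 ler_pdivrMr //.
Qed.

Section MxForm.
Variable R : realFieldType.

Definition mxform n (A : 'M[R]_n) (u v : 'cV[R]_n) : R := (u^T *m A *m v) 0 0.
Definition sqnorm n (v : 'cV[R]_n) : R := (v^T *m v) 0 0.

Lemma sqnormE n (v : 'cV[R]_n) : sqnorm v = \sum_i v i 0 ^+ 2.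
Proof. by rewrite /sqnorm mxE; apply: eq_bigr => i _; rewrite mxE expr2. Qed.

Lemma sqnorm_ge0 n (v : 'cV[R]_n) : 0 <= sqnorm v.
Proof. by rewrite sqnormE; apply: sumr_ge0 => i _; apply: sqr_ge0. Qed.

Lemma sqnorm_eq0 n (v : 'cV[R]_n) : sqnorm v = 0 -> v = 0.
Proof.
rewrite sqnormE => /eqP; rewrite psumr_eq0 => [/allP v0|i _]; last exact: sqr_ge0.
apply/matrixP => i j; rewrite ord1 mxE.
by have /implyP/(_ isT) := v0 i (mem_index_enum i); rewrite sqrf_eq0 => /eqP.
Qed.

Lemma sqr_coord_le_sqnorm n (v : 'cV[R]_n) i : v i 0 ^+ 2 <= sqnorm v.
Proof.
by rewrite sqnormE (bigD1 i) //= lerDl; apply: sumr_ge0 => j _; apply: sqr_ge0.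
Qed.

Lemma sqnorm_mulmx m n (M : 'M[R]_(m, n)) v : sqnorm (M *m v) = mxform (M^T *m M) v v.
Proof. by rewrite /sqnorm /mxform trmx_mul !mulmxA. Qed.

Lemma mxformE n (A : 'M[R]_n) u v : mxform A u v = (u^T *m (A *m v)) 0 0.
Proof. by rewrite /mxform mulmxA. Qed.

Lemma mxform_sym n (A : 'M[R]_n) u v : A^T = A -> mxform A u v = mxform A v u.
Proof.
move=> sA; rewrite /mxform -[u^T *m A *m v]trmxK [LHS]mxE.
by rewrite !trmx_mul trmxK sA mulmxA.
Qed.

Lemma mxform_expand n (A : 'M[R]_n) u v t : A^T = A ->
  mxform A (u + t *: v) (u + t *: v) =
  mxform A u u + 2 * t * mxform A u v + t ^+ 2 * mxform A v v.
Proof.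
move=> sA; have := mxform_sym v u sA; rewrite /mxform => vu.
rewrite (_ : (u + t *: v)^T = u^T + t *: v^T); last by rewrite linearD linearZ.
rewrite !mulmxDl !mulmxDr -!scalemxAl -!scalemxAr !mxE.
by move: vu; rewrite !mxE => ->; ring.
Qed.

Lemma mxformD n (A B : 'M[R]_n) v : mxform (A + B) v v = mxform A v v + mxform B v v.
Proof. by rewrite /mxform mulmxDr mulmxDl mxE. Qed.

Lemma mxformB n (A B : 'M[R]_n) v : mxform (A - B) v v = mxform A v v - mxform B v v.
Proof. by rewrite mxformD /mxform mulmxN mulNmx !mxE. Qed.

Lemma mxformZ n (A : 'M[R]_n) a v : mxform (a *: A) v v = a * mxform A v v.
Proof. by rewrite /mxform -scalemxAr -scalemxAl mxE. Qed.

Lemma mxform1 n (v : 'cV[R]_n) : mxform 1%:M v v = sqnorm v.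
Proof. by rewrite /mxform mulmx1. Qed.

Lemma mxform_delta n (A : 'M[R]_n) i : mxform A (delta_mx i 0) (delta_mx i 0) = A i i.
Proof. by rewrite /mxform trmx_delta -rowE -colE !mxE. Qed.

Lemma mxform_le_sqnorm n (A : 'M[R]_n) :
  exists2 c, 0 <= c & forall v, mxform A v v <= c * sqnorm v.
Proof.
exists (\sum_j \sum_i `|A i j|); first by do 2!apply: sumr_ge0 => ? _.
move=> v; rewrite /mxform mxE mulr_suml; apply: ler_sum => j _.
rewrite mxE !mulr_suml; apply: ler_sum => i _; rewrite mxE.
have coord_le k : `|v k 0| ^+ 2 <= sqnorm v.
  by rewrite real_normK ?num_real // sqr_coord_le_sqnorm.
have vij : `|v i 0| * `|v j 0| <= sqnorm v.
  by have := coord_le i; have := coord_le j; nra.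
rewrite (le_trans (ler_norm _)) // !normrM.
by have := normr_ge0 (A i j); nra.
Qed.

Lemma sqnorm_mulmx_le m n (M : 'M[R]_(m, n)) :
  exists2 c, 0 <= c & forall v, sqnorm (M *m v) <= c * sqnorm v.
Proof.
have [c c_ge0 hc] := mxform_le_sqnorm (M^T *m M).
by exists c => // v; rewrite sqnorm_mulmx.
Qed.

Lemma mulmx_tr_eq0 m n (M : 'M[R]_(m, n)) : M *m M^T = 0 -> M = 0.
Proof.
move=> MMt0; apply/matrixP => i j.
have : sqnorm (row i M)^T = 0.
  have Mii : (M *m M^T) i i = 0 by rewrite MMt0 mxE.
  by rewrite -{}[RHS]Mii /sqnorm trmxK !mxE; apply: eq_bigr => k _; rewrite !mxE.
by move/sqnorm_eq0/matrixP/(_ j 0); rewrite !mxE.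
Qed.

Lemma row_space_proj m n (S : 'M[R]_(m, n)) : exists P : 'M[R]_n,
  [/\ P^T = P, P *m P = P, \tr P = (\rank S)%:R, S *m P = S & (P <= S)%MS].
Proof.
have [D defS] : exists D, S = D *m row_base S by apply/submxP; rewrite eq_row_base.
have B_sub : (row_base S <= S)%MS by rewrite eq_row_base.
move: (row_base S) (row_base_free S) defS B_sub => B B_free defS B_sub.
pose G := B *m B^T.
have G_unit : G \in unitmx.
  rewrite -row_free_unit -kermx_eq0; apply/eqP.
  have /mulmx_tr_eq0 : (kermx G *m B) *m (kermx G *m B)^T = 0.
    by rewrite trmx_mul !mulmxA -(mulmxA _ B) mulmx_ker mul0mx.
  by move/eqP; rewrite mulmx_free_eq0 // => /eqP.
have GtG : G^T = G by rewrite trmx_mul trmxK.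
exists (B^T *m invmx G *m B); split.
- by rewrite !trmx_mul trmxK trmx_inv GtG mulmxA.
- by rewrite -!mulmxA (mulmxA B) -/G (mulmxA G) mulmxV // mul1mx.
- by rewrite mxtrace_mulC mulmxA -/G mulmxV // mxtrace1.
- by rewrite {1}defS -!mulmxA (mulmxA B) -/G (mulmxA G) mulmxV // mul1mx.
- exact: mulmx_sub B_sub.
Qed.
End MxForm.

Section Psd.
Variable R : realType.

Lemma psd_form_ge0 n (A : 'M[R]_n) v : psdmx A -> 0 <= mxform A v v.
Proof. by case=> _; apply. Qed.

Lemma psd_cauchy_schwarz n (A : 'M[R]_n) u v : psdmx A ->
  mxform A u v ^+ 2 <= mxform A u u * mxform A v v.
Proof.
move=> psdA; have [sA _] := psdA.
apply: quadratic_ge0_discr (psd_form_ge0 v psdA) _ => t.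
by rewrite -mxform_expand // psd_form_ge0.
Qed.

Lemma psd_form_eq0 n (A : 'M[R]_n) v : psdmx A -> mxform A v v = 0 -> A *m v = 0.
Proof.
move=> psdA Av0; apply: sqnorm_eq0; apply/eqP; rewrite -sqrf_eq0 eq_le sqr_ge0 andbT.
have <- : mxform A (A *m v) v = sqnorm (A *m v) by rewrite mxformE.
by rewrite -(mulr0 (mxform A (A *m v) (A *m v))) -Av0 psd_cauchy_schwarz.
Qed.

Lemma psd_sqnorm_le_form n (A : 'M[R]_n) : psdmx A ->
  exists2 c, 0 <= c & forall v, sqnorm (A *m v) <= c * mxform A v v.
Proof.
move=> psdA; have [c c_ge0 hc] := mxform_le_sqnorm A; exists c => // v.
(* Cauchy-Schwarz for [A]:
   [|Av|^4 = <Av, v>_A^2 <= <Av, Av>_A <v, v>_A <= c |Av|^2 <v, v>_A]. *)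
have Av_form : sqnorm (A *m v) = mxform A (A *m v) v by rewrite mxformE.
have [Av0|Av_neq0] := eqVneq (sqnorm (A *m v)) 0.
  by rewrite Av0 mulr_ge0 ?psd_form_ge0.
have Av_gt0 : 0 < sqnorm (A *m v) by rewrite lt0r Av_neq0 sqnorm_ge0.
rewrite -(ler_pM2l Av_gt0) -expr2 {1}Av_form.
apply: le_trans (psd_cauchy_schwarz _ _ psdA) _.
by rewrite mulrA ler_wpM2r ?psd_form_ge0 // mulrC hc.
Qed.

Lemma psd_tr_ge0 n (A : 'M[R]_n) : psdmx A -> 0 <= \tr A.
Proof.
by move=> psdA; apply: sumr_ge0 => i _; rewrite -mxform_delta psd_form_ge0.
Qed.

Lemma psdD n (A B : 'M[R]_n) : psdmx A -> psdmx B -> psdmx (A + B).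
Proof.
move=> psdA psdB; have [sA _] := psdA; have [sB _] := psdB.
split=> [|v]; first by rewrite /symmx linearD /= sA sB.
by rewrite -/(mxform _ v v) mxformD addr_ge0 ?psd_form_ge0.
Qed.

Lemma psdZ n (A : 'M[R]_n) a : 0 <= a -> psdmx A -> psdmx (a *: A).
Proof.
move=> a_ge0 psdA; have [sA _] := psdA.
split=> [|v]; first by rewrite /symmx linearZ /= sA.
by rewrite -/(mxform _ v v) mxformZ mulr_ge0 ?psd_form_ge0.
Qed.

Lemma psd_proj n (P : 'M[R]_n) : P^T = P -> P *m P = P -> psdmx P.
Proof.
move=> sP idP; split=> // v.
by rewrite -/(mxform _ v v) -[in X in mxform X]idP -{1}sP -sqnorm_mulmx sqnorm_ge0.
Qed.

Lemma loewner_ge0 n (A : 'M[R]_n) : loewner_ge A 0 = psdmx A.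
Proof. by rewrite /loewner_ge subr0. Qed.

Lemma loewner_ge_trans n (A B C : 'M[R]_n) :
  loewner_ge A B -> loewner_ge B C -> loewner_ge A C.
Proof.
move=> AB BC; rewrite /loewner_ge (_ : A - C = (A - B) + (B - C)).
  exact: psdD.
by rewrite addrA subrK.
Qed.

Lemma loewner_ge_scale n (A : 'M[R]_n) a b : psdmx A -> a <= b ->
  loewner_ge (b *: A) (a *: A).
Proof.
by move=> psdA le_ab; rewrite /loewner_ge -scalerBl; apply: psdZ; rewrite ?subr_ge0.
Qed.

Lemma loewner_ge_tr n (A B : 'M[R]_n) : loewner_ge A B -> \tr B <= \tr A.
Proof. by move/psd_tr_ge0; rewrite linearB subr_ge0. Qed.

Lemma loewner_ge_proj1 n (P : 'M[R]_n) : P^T = P -> P *m P = P ->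
  loewner_ge 1%:M P.
Proof.
move=> sP idP; apply: psd_proj; first by rewrite linearB /= trmx1 sP.
by rewrite mulmxBl mul1mx mulmxBr mulmx1 idP subrr subr0.
Qed.

Lemma loewner_ge_ker n p (X T : 'M[R]_n) (Q : 'M[R]_(n, p)) :
  loewner_ge X T -> psdmx T -> X *m Q = 0 -> T *m Q = 0.
Proof.
move=> XT psdT XQ; apply/matrixP => i j.
have TQj : T *m col j Q = 0.
  apply: psd_form_eq0 => //; apply/eqP; rewrite eq_le psd_form_ge0 // andbT.
  have := psd_form_ge0 (col j Q) XT.
  by rewrite mxformB mxformE colE (mulmxA X) XQ mul0mx mulmx0 mxE sub0r oppr_ge0.
by have := congr1 (fun M : 'cV_n => M i 0) TQj; rewrite colE mulmxA -colE !mxE.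
Qed.

Lemma loewner_ge_proj n (P T : 'M[R]_n) : P^T = P -> P *m P = P -> T *m P = T ->
  loewner_ge T 0 -> loewner_ge 1%:M T -> loewner_ge P T.
Proof.
rewrite loewner_ge0 => sP idP TP psdT T1; have [sT _] := psdT.
have PT : P *m T = T by rewrite -[LHS]trmxK trmx_mul sT sP TP sT.
split=> [|v]; first by rewrite /symmx linearB /= sP sT.
rewrite -/(mxform _ v v) mxformB subr_ge0.
have -> : mxform T v v = mxform T (P *m v) (P *m v).
  by rewrite /mxform trmx_mul sP -!mulmxA (mulmxA T) TP (mulmxA P) PT.
have -> : mxform P v v = sqnorm (P *m v) by rewrite sqnorm_mulmx sP idP.
by have := psd_form_ge0 (P *m v) T1; rewrite mxformB mxform1 subr_ge0.
Qed.

Lemma loewner_ge_tr_le_rank n (X T : 'M[R]_n) :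
  loewner_ge X T -> loewner_ge T 0 -> loewner_ge 1%:M T -> \tr T <= (\rank X)%:R.
Proof.
move=> XT T0 T1; have [P [sP idP <- XP _]] := row_space_proj X.
have TP : T *m P = T.
  have XQ : X *m (P - 1%:M) = 0 by rewrite mulmxBr mulmx1 XP subrr.
  apply/eqP; rewrite -subr_eq0 -{2}[T]mulmx1 -mulmxBr; apply/eqP.
  by apply: loewner_ge_ker XT _ XQ; rewrite -loewner_ge0.
exact/loewner_ge_tr/loewner_ge_proj.
Qed.

Lemma psd_dominates_range_proj n (S : 'M[R]_n) : psdmx S ->
  exists P, exists2 t, 0 <= t &
  [/\ loewner_ge P 0, loewner_ge 1%:M P, loewner_ge (t *: S) P & \tr P = (\rank S)%:R].
Proof.
move=> psdS; have [sS _] := psdS.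
have [P [sP idP trP _ /submxP[E defP]]] := row_space_proj S.
have [c1 c1_ge0 hc1] := sqnorm_mulmx_le E.
have [c2 c2_ge0 hc2] := psd_sqnorm_le_form psdS.
exists P, (c1 * c2); first exact: mulr_ge0.
split=> //; first by rewrite loewner_ge0; apply: psd_proj.
  exact: loewner_ge_proj1.
split=> [|v]; first by rewrite /symmx linearB linearZ /= sS sP.
rewrite -/(mxform _ v v) mxformB mxformZ subr_ge0.
have -> : mxform P v v = sqnorm (P *m v) by rewrite sqnorm_mulmx sP idP.
by rewrite {1}defP -mulmxA -mulrA (le_trans (hc1 _)) ?ler_wpM2l.
Qed.
End Psd.

Section Sdp.
Variables (R : realType) (d k N : nat) (W : 'I_N -> 'M[R]_(d, k)).
Variable V : {vspace 'M[R]_d}.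

Lemma WsumZ a (Xs : 'I_N -> 'M[R]_k) : Wsum W (fun i => a *: Xs i) = a *: Wsum W Xs.
Proof.
by rewrite /Wsum scaler_sumr; apply: eq_bigr => i _; rewrite -scalemxAr -scalemxAl.
Qed.

Lemma sdp_objective_le_rank X Xs Ts : sdp_feasible W V X Xs Ts ->
  sdp_objective Ts <= \sum_(i < N) (\rank (Xs i))%:R.
Proof.
move=> [_ [_ _ XT T1 T0]]; apply: ler_sum => i _.
exact: loewner_ge_tr_le_rank.
Qed.

Hypothesis V_sym : forall A, (A \in V)%VS -> symmx A.

Lemma sdp_rank_attained Xs : (forall i, psdmx (Xs i)) -> (Wsum W Xs \in V)%VS ->
  exists X' Xs' Ts', sdp_feasible W V X' Xs' Ts' /\
    sdp_objective Ts' = \sum_(i < N) (\rank (Xs i))%:R.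
Proof.
move=> psdXs WXs_V.
have /fin_all_exists[Pt PtP] : forall i, exists Pt : 'M[R]_k * R, 0 <= Pt.2 /\
    [/\ loewner_ge Pt.1 0, loewner_ge 1%:M Pt.1,
        loewner_ge (Pt.2 *: Xs i) Pt.1 & \tr Pt.1 = (\rank (Xs i))%:R].
  by move=> i; have [P [t t_ge0 Pt]] := psd_dominates_range_proj (psdXs i); exists (P, t).
pose t := \sum_i (Pt i).2.
exists (t *: Wsum W Xs), (fun i => t *: Xs i), (fun i => (Pt i).1); split; last first.
  by apply: eq_bigr => i _; have [_ [_ _ _ ->]] := PtP i.
split; split.
- by apply: V_sym; rewrite memvZ.
- by move=> i; rewrite /symmx linearZ /=; case: (psdXs i) => ->.
- by move=> i; have [_ [+ _ _ _]] := PtP i; rewrite loewner_ge0 => -[].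
- by rewrite memvZ.
- by rewrite WsumZ.
- move=> i; have [ti_ge0 [_ _ tiXs _]] := PtP i.
  apply: loewner_ge_trans tiXs; apply: loewner_ge_scale => //.
  by rewrite /t (bigD1 i) //= lerDl sumr_ge0 // => j _; case: (PtP j).
- by move=> i; case: (PtP i) => _ [].
- by move=> i; case: (PtP i) => _ [].
Qed.
End Sdp.

Unset Implicit Arguments.

Theorem lemma7 (R : realType) (d k N : nat) (W : 'I_N -> 'M[R]_(d, k))
  (V : {vspace 'M[R]_d})
  (hV : forall A : 'M[R]_d, (A \in V)%VS -> symmx A)
  (X : 'M[R]_d) (Xs Ts : 'I_N -> 'M[R]_k) :
  sdp_optimal W V X Xs Ts ->
  forall Xs' : 'I_N -> 'M[R]_k,
    (forall i, psdmx (Xs' i)) ->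
    (Wsum W Xs' \in V)%VS ->
    (\sum_(i < N) \rank (Xs' i) <= \sum_(i < N) \rank (Xs i))%N.
Proof.
move=> [feas opt] Xs' psdXs' WXs'_V.
have [X'' [Xs'' [Ts'' [feas'' obj'']]]] := sdp_rank_attained hV psdXs' WXs'_V.
rewrite -(ler_nat R) !natr_sum -obj''.
exact: le_trans (opt _ _ _ feas'') (sdp_objective_le_rank feas).
Qed.
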